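(* Let $S$ be a finite $p$-group and $\mathcal{A}$ a divisible $S$-algebra. Then $\mathcal{A}$ has all twisted units if and only if, for all isomorphisms $\varphi:P\to Q$ and $\psi:Q\to R$ of $\mathfrak{F}_S(\mathcal{A})$, every element of $\mathcal{A}(\psi\varphi)$ is of the form $xy$ with $x\in\mathcal{A}(\psi)$ and $y\in\mathcal{A}(\varphi)$ (i.e. the multiplication pairing $\mathcal{A}(\psi)\times\mathcal{A}(\varphi)\to\mathcal{A}(\psi\varphi)$ is surjective).
   Context: $\mathcal{O}$ is a complete local noetherian domain with maximal ideal $\mathfrak{m}$ and algebraically closed residue field of characteristic $p$. An interior $S$-algebra is an $\mathcal{O}$-free finite-rank $\mathcal{O}$-algebra $\mathcal{A}$ with group homomorphism $S\to\mathcal{A}^\times$; $S\times S$ acts by $(s,t)a=sat^{-1}$; it is bifree if it has an $\mathcal{O}$-basis $Y$ with $sY=Y=Ys$ ($s\in S$) on which left and right actions are free. For $P\le S$ and injective $\varphi:P\to S$, ${}^\varphi\mathcal{A}^P=\{a:\varphi(p)a=ap\ \forall p\}$ is the fixed points of $\Delta(\varphi,P)=\{(\varphi(p),p)\}$, and $\mathcal{A}(\varphi)=\mathcal{A}^{\Delta}/(\mathfrak{m}\mathcal{A}^\Delta+\sum_{V<\Delta}\mathrm{tr}_V^\Delta\mathcal{A}^V)$ with $\Delta=\Delta(\varphi,P)$ and quotient map $\mathrm{br}_\varphi$; $\mathcal{A}(P)=\mathcal{A}(\iota_P)$. Multiplication induces $\mathcal{A}(\psi)\times\mathcal{A}(\varphi)\to\mathcal{A}(\psi\varphi)$,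 $\mathrm{br}_\psi(a)\mathrm{br}_\varphi(c)=\mathrm{br}_{\psi\varphi}(ac)$. $\mathfrak{F}_S(\mathcal{A})$: objects subgroups of $S$, $\mathrm{Hom}(P,Q)=\{\varphi:P\to Q$ injective$:\mathcal{A}(\varphi)\ne0\}$. $\mathcal{A}$ is divisible if it is bifree and $\mathfrak{F}_S(\mathcal{A})$ contains all inclusions, is closed under composition, and every morphism is an inclusion composed with an isomorphism of $\mathfrak{F}_S(\mathcal{A})$. For an isomorphism $\varphi:P\to Q$ of $\mathfrak{F}_S(\mathcal{A})$, a twisted unit of $\varphi$ is $u\in\mathcal{A}(\varphi)$ such that some $u^\dagger\in\mathcal{A}(\varphi^{-1})$ satisfies $u^\dagger u=1_{\mathcal{A}(P)}$; $\mathcal{A}$ has all twisted units if every isomorphism of $\mathfrak{F}_S(\mathcal{A})$ has a twisted unit. *)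

From HB Require Import structures.
From mathcomp Require Import all_boot all_order all_algebra all_fingroup all_solvable.
Set Implicit Arguments.
Unset Strict Implicit.
Unset Printing Implicit Defensive.
Import GRing.Theory.
Local Open Scope ring_scope.

Section Coefficients.
Variable O : idomainType.

Definition is_ideal (I : {pred O}) : Prop :=
  [/\ 0 \in I, {in I &, forall x y, x + y \in I} &
      forall r x, x \in I -> r * x \in I].

Definition generated_by (s : seq O) (x : O) : Prop :=
  exists c : 'I_(size s) -> O, x = \sum_(i < size s) c i * s`_i.

Definition noetherian_ring : Prop :=
  forall I : {pred O}, is_ideal I ->
    exists s : seq O, forall x, x \in I <-> generated_by s x.

Definition local_with_max_ideal (m : {pred O}) : Prop :=
  [/\ is_ideal m, 1 \notin m & forall x, x \notin m -> x \is a GRing.unit].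

Definition in_ideal_pow (m : {pred O}) (n : nat) (x : O) : Prop :=
  exists s : seq (O * n.-tuple O),
    (forall t, t \in s -> forall i : 'I_n, tnth t.2 i \in m) /\
    x = \sum_(t <- s) t.1 * \prod_(i < n) tnth t.2 i.

Definition madic_complete (m : {pred O}) : Prop :=
  (forall x, (forall n, in_ideal_pow m n x) -> x = 0) /\
  (forall a : nat -> O, (forall n, in_ideal_pow m n (a n.+1 - a n)) ->
     exists l, forall n, in_ideal_pow m n (l - a n)).

Definition residue_alg_closed (m : {pred O}) : Prop :=
  forall f : {poly O}, f \is monic -> (1 < size f)%N ->
    exists a, f.[a] \in m.

Definition residue_char (m : {pred O}) (p : nat) : Prop :=
  prime p /\ (p%:R : O) \in m.

Definition good_coefficients (m : {pred O}) (p : nat) : Prop :=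
  [/\ local_with_max_ideal m, noetherian_ring, madic_complete m,
      residue_alg_closed m & residue_char m p].

End Coefficients.

Section Interior.
Variables (O : idomainType) (A : algType O) (gT : finGroupType).

Definition interior_structure (S : {set gT}) (u : gT -> A) : Prop :=
  u 1%g = 1 /\ {in S &, forall s t, u (s * t)%g = u s * u t}.

Definition is_O_basis (Y : seq A) : Prop :=
  (forall a : A, exists c : 'I_(size Y) -> O,
      a = \sum_(i < size Y) c i *: Y`_i) /\
  (forall c : 'I_(size Y) -> O,
      \sum_(i < size Y) c i *: Y`_i = 0 -> forall i, c i = 0).

Definition bifree (S : {set gT}) (u : gT -> A) : Prop :=
  exists Y : seq A,
    [/\ is_O_basis Y,
        forall s, s \in S -> [seq u s * y | y <- Y] =i Y,
        forall s, s \in S -> [seq y * u s | y <- Y] =i Y,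
        forall s y, s \in S -> y \in Y -> u s * y = y -> s = 1%g &
        forall s y, s \in S -> y \in Y -> y * u s = y -> s = 1%g].

Variable u : gT -> A.

Definition sact (x : gT * gT) (a : A) : A := u x.1 * a * u (x.2)^-1.

Definition fixedpt (D : {set gT * gT}) (a : A) : Prop :=
  forall x, x \in D -> sact x a = a.

Definition rtrace (V D : {set gT * gT}) (a : A) : A :=
  \sum_(C in lcosets V D) sact (repr C) a.

(* a belongs to  m A^D + sum_{V < D} tr_V^D A^V, the kernel of br *)
Definition brker (m : {pred O}) (D : {set gT * gT}) (a : A) : Prop :=
  exists (s : seq (O * A)) (c : {group (gT * gT)} -> A),
    [/\ forall t, t \in s -> t.1 \in m /\ fixedpt D t.2,
        forall V : {group (gT * gT)}, V \proper D -> fixedpt V (c V) &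
        a = \sum_(t <- s) t.1 *: t.2 +
            \sum_(V : {group (gT * gT)} | V \proper D) rtrace V D (c V)].

Definition Delta (phi : gT -> gT) (P : {set gT}) : {set gT * gT} :=
  [set (phi x, x) | x in P].

(* A(phi) <> 0 *)
Definition brauer_nonzero (m : {pred O}) (phi : gT -> gT) (P : {set gT})
  : Prop :=
  exists a, fixedpt (Delta phi P) a /\ ~ brker m (Delta phi P) a.

Definition inj_hom (phi : gT -> gT) (P Q : {set gT}) : Prop :=
  [/\ {in P &, forall x y, phi (x * y)%g = (phi x * phi y)%g},
      {in P &, injective phi} & phi @: P \subset Q].

Variables (m : {pred O}) (S : {set gT}).

Definition FHom (P Q : {group gT}) (phi : gT -> gT) : Prop :=
  [/\ P \subset S, Q \subset S, inj_hom phi P Q & brauer_nonzero m phi P].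

Definition FIso_with (P Q : {group gT}) (phi phi' : gT -> gT) : Prop :=
  [/\ FHom P Q phi, FHom Q P phi',
      {in P, forall x, phi' (phi x) = x} & {in Q, forall y, phi (phi' y) = y}].

Definition FIso (P Q : {group gT}) (phi : gT -> gT) : Prop :=
  exists phi', FIso_with P Q phi phi'.

Definition divisible : Prop :=
  [/\ bifree S u,
      forall P Q : {group gT}, P \subset S -> Q \subset S -> P \subset Q ->
        FHom P Q id,
      forall (P Q R : {group gT}) (phi psi : gT -> gT),
        FHom P Q phi -> FHom Q R psi -> FHom P R (psi \o phi) &
      forall (P Q : {group gT}) (phi : gT -> gT), FHom P Q phi ->
        exists (Q' : {group gT}) (alpha : gT -> gT),
          [/\ FIso P Q' alpha, Q' \subset Q & {in P, phi =1 alpha}]].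

(* u in A(phi) is a twisted unit: some u' in A(phi^-1) has u' u = 1 in A(P) *)
Definition twisted_unit (P Q : {group gT}) (phi phi' : gT -> gT) (a : A)
  : Prop :=
  fixedpt (Delta phi P) a /\
  exists a', fixedpt (Delta phi' Q) a' /\
             brker m (Delta id P) (a' * a - 1).

Definition has_all_twisted_units : Prop :=
  forall (P Q : {group gT}) (phi phi' : gT -> gT),
    FIso_with P Q phi phi' -> exists a, twisted_unit P Q phi phi' a.

Definition pairing_surjective (P Q : {group gT}) (phi psi : gT -> gT) : Prop :=
  forall c, fixedpt (Delta (psi \o phi) P) c ->
    exists x y, [/\ fixedpt (Delta psi Q) x, fixedpt (Delta phi P) y &
                    brker m (Delta (psi \o phi) P) (c - x * y)].

End Interior.

(* A twisted unit [a] of [phi], with [a' a = 1] in A(P), writes any [c] in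
   A(psi phi) as [(c a') a] modulo the Brauer kernel.  The point is that left
   multiplication by a Delta(g, P)-fixed element maps the kernel of br_P into
   that of br_g: the subgroups of Delta(id, P) are the Delta(id, V) with V <= P,
   and multiplying by such an element carries traces from Delta(id, V) to
   Delta(id, P) onto traces from Delta(g, V) to Delta(g, P).  Conversely, a
   preimage of 1 under A(phi^-1) x A(phi) -> A(P) is a twisted unit.  Neither
   direction uses the hypotheses on O, on S being a p-group, or divisibility. *)

From mathcomp Require Import all_boot all_order all_algebra all_fingroup all_solvable.
Set Implicit Arguments.
Unset Strict Implicit.
Unset Printing Implicit Defensive.
Import GRing.Theory.
Local Open Scope ring_scope.

Section BrauerKernel.
Variables (O : idomainType) (A : algType O) (gT : finGroupType) (u : gT -> A)
  (m : {pred O}).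

Lemma sact0 x : sact u x 0 = 0.
Proof. by rewrite /sact mulr0 mul0r. Qed.

Lemma sactD x a b : sact u x (a + b) = sact u x a + sact u x b.
Proof. by rewrite /sact mulrDr mulrDl. Qed.

Lemma sactN x a : sact u x (- a) = - sact u x a.
Proof. by rewrite /sact mulrN mulNr. Qed.

Lemma fixedpt0 D : fixedpt u D 0.
Proof. by move=> x _; rewrite sact0. Qed.

Lemma fixedptD D a b : fixedpt u D a -> fixedpt u D b -> fixedpt u D (a + b).
Proof. by move=> Da Db x xD; rewrite sactD Da ?Db. Qed.

Lemma fixedptN D a : fixedpt u D a -> fixedpt u D (- a).
Proof. by move=> Da x xD; rewrite sactN Da. Qed.

Lemma rtrace0 V D : rtrace u V D 0 = 0.
Proof. by rewrite /rtrace big1 // => C _; rewrite sact0. Qed.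

Lemma rtraceD V D a b : rtrace u V D (a + b) = rtrace u V D a + rtrace u V D b.
Proof. by rewrite /rtrace -big_split; apply: eq_bigr => C _; rewrite sactD. Qed.

Lemma rtraceN V D a : rtrace u V D (- a) = - rtrace u V D a.
Proof. by rewrite /rtrace -sumrN; apply: eq_bigr => C _; rewrite sactN. Qed.

Lemma brker0 D : brker u m D 0.
Proof.
exists [::], (fun _ => 0); split=> // [V _|]; first exact: fixedpt0.
by rewrite big_nil add0r big1 // => V _; rewrite rtrace0.
Qed.

Lemma brkerD D a b : brker u m D a -> brker u m D b -> brker u m D (a + b).
Proof.
move=> [s1 [c1 [s1D c1V ->]]] [s2 [c2 [s2D c2V ->]]].
exists (s1 ++ s2), (fun V => c1 V + c2 V); split.
- by move=> t; rewrite mem_cat => /orP[/s1D|/s2D].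
- by move=> V VD; apply: fixedptD; [apply: c1V | apply: c2V].
rewrite big_cat (eq_bigr _ (fun (V : {group _}) _ => rtraceD V D (c1 V) (c2 V))).
by rewrite big_split addrACA.
Qed.

Lemma brkerN D a : brker u m D a -> brker u m D (- a).
Proof.
move=> [s [c [sD cV ->]]].
exists [seq (t.1, - t.2) | t <- s], (fun V => - c V); split.
- move=> _ /mapP[t ts ->] /=; have [tm tD] := sD t ts.
  by split=> //; apply: fixedptN.
- by move=> V VD; apply: fixedptN; apply: cV.
rewrite big_map opprD -!sumrN.
by congr (_ + _); apply: eq_bigr => ? _; rewrite /= ?scalerN ?rtraceN.
Qed.

Lemma brker_sum D (I : Type) (r : seq I) (P : pred I) (F : I -> A) :
  (forall i, P i -> brker u m D (F i)) -> brker u m D (\sum_(i <- r | P i) F i).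
Proof. by move=> DF; apply: big_ind => //; [apply: brker0 | apply: brkerD]. Qed.

Lemma brkerZ D k a : k \in m -> fixedpt u D a -> brker u m D (k *: a).
Proof.
move=> km Da; exists [:: (k, a)], (fun _ => 0); split.
- by move=> t; rewrite inE => /eqP ->.
- by move=> V _; apply: fixedpt0.
by rewrite big_seq1 big1 ?addr0 // => V _; rewrite rtrace0.
Qed.

Lemma brker_rtrace (D : {set gT * gT}) (V : {group gT * gT}) a :
  V \proper D -> fixedpt u V a -> brker u m D (rtrace u V D a).
Proof.
move=> VD Va; exists [::], (fun W => if W == V then a else 0); split=> //.
  by move=> W _; case: eqP => [-> //|_]; apply: fixedpt0.
rewrite big_nil add0r (bigD1 V) //= eqxx big1 ?addr0 // => W /andP[_ /negbTE ->].
by rewrite rtrace0.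
Qed.

End BrauerKernel.

Section Diagonal.
Variable gT : finGroupType.
Implicit Types (g : gT -> gT) (P V : {set gT}).

Lemma Delta_inj g : injective (Delta g).
Proof. by apply: imset_inj => x y []. Qed.

Lemma mem_Delta g P x : ((g x, x) \in Delta g P) = (x \in P).
Proof. by rewrite mem_imset // => y z []. Qed.

Lemma card_Delta g P : #|Delta g P| = #|P|.
Proof. by rewrite card_imset // => y z []. Qed.

Lemma Delta_subset g V P : (Delta g V \subset Delta g P) = (V \subset P).
Proof.
apply/idP/idP => [/subsetP DVP | VP]; last exact: imsetS.
by apply/subsetP => x xV; rewrite -(mem_Delta g) DVP ?mem_Delta.
Qed.

Lemma Delta_proper g V P : (Delta g V \proper Delta g P) = (V \proper P).
Proof. by rewrite !properEcard Delta_subset !card_Delta. Qed.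

Lemma Delta_group_set g (H : {group gT}) :
  {in H &, {morph g : x y / (x * y)%g}} -> group_set (Delta g H).
Proof.
move=> gM; have g1 : g 1%g = 1%g.
  by apply: (mulgI (g 1%g)); rewrite -gM ?group1 // !mulg1.
apply/group_setP; split.
  by rewrite -[1%g]/(1%g, 1%g) -{1}g1 mem_Delta.
move=> _ _ /imsetP[x xH ->] /imsetP[y yH ->].
by rewrite -[(_ * _)%g]/(g x * g y, x * y)%g -gM // mem_Delta groupM.
Qed.

Lemma Delta_lcoset g P V y :
  {in P &, {morph g : x y / (x * y)%g}} -> V \subset P -> y \in P ->
  ((g y, y) *: Delta g V)%g = Delta g (y *: V)%g.
Proof.
move=> gM VP yP; rewrite -!lcosetE /lcoset /Delta -!imset_comp.
by apply: eq_in_imset => x xV /=; rewrite gM // (subsetP VP).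
Qed.

Lemma lcosets_Delta g P V :
  {in P &, {morph g : x y / (x * y)%g}} -> V \subset P ->
  lcosets (Delta g V) (Delta g P) = Delta g @: lcosets V P.
Proof.
move=> gM VP; have -> : Delta g P = (fun x => (g x, x)) @: P by [].
rewrite /lcosets -!imset_comp; apply: eq_in_imset => y yP /=.
by rewrite !lcosetE (Delta_lcoset gM).
Qed.

Lemma sub_Delta_id P (V : {group gT * gT}) :
  V \subset Delta id P -> exists2 V0 : {group gT}, V0 \subset P & V :=: Delta id V0.
Proof.
move=> VP; pose V0 := [set x | (x, x) \in V].
have V0_group : group_set V0.
  apply/group_setP; split=> [|x y]; rewrite !inE; first exact: group1.
  exact: groupM.
exists (Group V0_group).
  by apply/subsetP => x; rewrite inE => /(subsetP VP); rewrite (mem_Delta id).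
apply/setP => z; apply/idP/imsetP => [zV | [x] /=].
  have /imsetP[x _ zE] := subsetP VP z zV.
  by exists x; rewrite // inE -zE.
by rewrite inE => xV ->.
Qed.

End Diagonal.

Section InteriorAction.
Variables (O : idomainType) (A : algType O) (gT : finGroupType) (u : gT -> A)
  (S : {group gT}).
Hypothesis Hu : interior_structure S u.

Lemma mulVu y : y \in S -> u y^-1 * u y = 1.
Proof. by case: Hu => u1 uM yS; rewrite -uM ?groupV // mulVg u1. Qed.

Lemma muluV y : y \in S -> u y * u y^-1 = 1.
Proof. by case: Hu => u1 uM yS; rewrite -uM ?groupV // mulgV u1. Qed.

Lemma sactM x y a : x \in setX S S -> y \in setX S S ->
  sact u (x * y)%g a = sact u x (sact u y a).
Proof.
case: x y => [x1 x2] [y1 y2]; rewrite !in_setX => /andP[x1S x2S] /andP[y1S y2S].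
have [_ uM] := Hu.
by rewrite /sact /= uM // invMg uM ?groupV // !mulrA.
Qed.

Lemma sact_lcoset (W : {group gT * gT}) x y a :
  W \subset setX S S -> fixedpt u W a -> x \in setX S S -> y \in (x *: W)%g ->
  sact u y a = sact u x a.
Proof.
move=> WS Wa xS /lcosetP[w wW ->].
by rewrite sactM ?(Wa w wW) // (subsetP WS w wW).
Qed.

Lemma sact_mul x y z a b : y \in S ->
  sact u (x, y) a * sact u (y, z) b = sact u (x, z) (a * b).
Proof.
move=> yS; rewrite /sact /= -!mulrA; congr (_ * (_ * _)).
by rewrite mulrA mulVu // mul1r.
Qed.

Lemma fixedpt_mul (P Q : {set gT}) phi psi x y :
  Q \subset S -> phi @: P \subset Q ->
  fixedpt u (Delta psi Q) x -> fixedpt u (Delta phi P) y ->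
  fixedpt u (Delta (psi \o phi) P) (x * y).
Proof.
move=> QS phiPQ Qx Py _ /imsetP[z zP ->].
have phizQ : phi z \in Q by rewrite (subsetP phiPQ) ?imset_f.
by rewrite -(sact_mul _ _ _ _ (subsetP QS _ phizQ)) /= Qx ?Py ?mem_Delta.
Qed.

Lemma fixedpt1_Delta_id (P : {set gT}) : P \subset S -> fixedpt u (Delta id P) 1.
Proof.
by move=> PS _ /imsetP[x xP ->]; rewrite /sact /= mulr1 muluV ?(subsetP PS).
Qed.

End InteriorAction.

Section TraceTransfer.
Variables (O : idomainType) (A : algType O) (gT : finGroupType) (u : gT -> A)
  (m : {pred O}) (S P : {group gT}).
Hypotheses (Hu : interior_structure S u) (PS : P \subset S).

Lemma Delta_subX g (V : {set gT}) :
  g @: P \subset S -> V \subset P -> Delta g V \subset setX S S.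
Proof.
move=> gPS VP; apply/subsetP => _ /imsetP[x xV ->].
have xP := subsetP VP x xV.
by rewrite in_setX (subsetP gPS) ?imset_f ?(subsetP PS).
Qed.

Lemma rtrace_Delta g (V : {group gT}) a :
  {in P &, {morph g : x y / (x * y)%g}} -> g @: P \subset S -> V \subset P ->
  fixedpt u (Delta g V) a ->
  rtrace u (Delta g V) (Delta g P) a =
    \sum_(C in lcosets V P) sact u (g (repr C), repr C) a.
Proof.
move=> gM gPS VP Va.
pose W := Group (Delta_group_set (sub_in2 (subsetP VP) gM)).
have WS : W \subset setX S S by apply: Delta_subX.
rewrite /rtrace lcosets_Delta // big_imset /=; last by move=> ? ? _ _; apply: Delta_inj.
apply: eq_bigr => _ /lcosetsP[y yP ->].
have yS : (g y, y) \in setX S S.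
  by rewrite in_setX (subsetP gPS) ?imset_f ?(subsetP PS).
rewrite -(Delta_lcoset gM VP yP).
rewrite (sact_lcoset Hu WS Va yS (mem_repr _ (lcoset_refl W (g y, y)))).
symmetry; apply: (sact_lcoset Hu WS Va yS).
by rewrite /= (Delta_lcoset gM VP yP) mem_Delta (mem_repr _ (lcoset_refl V y)).
Qed.

Lemma rtrace_mull g (V : {group gT}) c w :
  {in P &, {morph g : x y / (x * y)%g}} -> g @: P \subset S -> V \subset P ->
  fixedpt u (Delta g P) c -> fixedpt u (Delta id V) w ->
  c * rtrace u (Delta id V) (Delta id P) w =
    rtrace u (Delta g V) (Delta g P) (c * w).
Proof.
move=> gM gPS VP Pc Vw.
have idM : {in P &, {morph id : x y / (x * y)%g}} by [].
have idPS : id @: P \subset S by rewrite imset_id.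
have Vcw : fixedpt u (Delta g V) (c * w).
  by apply: (fixedpt_mul Hu PS) => //; rewrite imset_id.
rewrite (rtrace_Delta gM gPS VP Vcw) (rtrace_Delta idM idPS VP Vw) mulr_sumr.
apply: eq_bigr => _ /lcosetsP[y yP ->].
set r := repr (y *: V)%g.
have rP : r \in P.
  have /lcosetP[v vV ->] : r \in (y *: V)%g := mem_repr _ (lcoset_refl V y).
  by rewrite groupM // (subsetP VP).
by rewrite -{1}(Pc (g r, r)) ?mem_Delta // (sact_mul Hu) // (subsetP PS).
Qed.

Lemma brker_mull g c z :
  {in P &, {morph g : x y / (x * y)%g}} -> g @: P \subset S ->
  fixedpt u (Delta g P) c -> brker u m (Delta id P) z ->
  brker u m (Delta g P) (c * z).
Proof.
move=> gM gPS Pc [s [cV [sP Vc ->]]].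
have idPP : id @: P \subset P by rewrite imset_id.
rewrite mulrDr !mulr_sumr; apply: brkerD.
  rewrite big_seq; apply: brker_sum => t /sP[tm Pt].
  by rewrite -scalerAr; apply: brkerZ => //; apply: (fixedpt_mul Hu PS idPP).
apply: brker_sum => V VP.
have [V0 V0P VE] := sub_Delta_id (proper_sub VP).
have V0c : fixedpt u (Delta id V0) (cV V) by rewrite -VE; apply: Vc.
have gMV0 := sub_in2 (subsetP V0P) gM.
rewrite VE (rtrace_mull gM gPS V0P Pc V0c).
apply: (@brker_rtrace _ _ _ _ m _ (Group (Delta_group_set gMV0))).
  by rewrite /= Delta_proper -(Delta_proper id) -VE.
by apply: (fixedpt_mul Hu PS) => //; rewrite imset_id.
Qed.

End TraceTransfer.

Section FusionIsomorphisms.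
Variables (O : idomainType) (A : algType O) (gT : finGroupType) (u : gT -> A)
  (m : {pred O}) (S : {group gT}).
Hypothesis Hu : interior_structure S u.

Lemma inj_hom_comp (P Q R : {set gT}) phi psi :
  inj_hom phi P Q -> inj_hom psi Q R -> inj_hom (psi \o phi) P R.
Proof.
move=> [phiM phi_inj phiPQ] [psiM psi_inj psiQR].
have phiP x : x \in P -> phi x \in Q by move=> xP; rewrite (subsetP phiPQ) ?imset_f.
split=> [x y xP yP | x y xP yP /psi_inj | ] /=.
- by rewrite phiM // psiM ?phiP.
- by move=> /(_ (phiP x xP) (phiP y yP)) /phi_inj; apply.
by rewrite imset_comp (subset_trans (imsetS psi phiPQ)).
Qed.

Lemma FIso_with_sym (P Q : {group gT}) phi phi' :
  FIso_with u m S P Q phi phi' -> FIso_with u m S Q P phi' phi.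
Proof. by case. Qed.

Lemma pairing_surjective_of_twisted_unit (P Q R : {group gT}) phi phi' psi a :
  FIso_with u m S P Q phi phi' -> FHom u m S Q R psi ->
  twisted_unit u m P Q phi phi' a -> pairing_surjective u m P Q phi psi.
Proof.
move=> [[PS QS phiPQ _] [_ _ [_ _ phi'QP] _] _ phiK] [_ RS psiQR _].
move=> [Pa [a' [Qa' Ka]]] c Pc.
have [gM _ gPR] := inj_hom_comp phiPQ psiQR.
exists (c * a'), a; split=> //.
  have -> : Delta psi Q = Delta ((psi \o phi) \o phi') Q.
    by apply: eq_in_imset => y yQ /=; rewrite phiK.
  exact: (fixedpt_mul Hu PS).
rewrite -mulrA -{1}(mulr1 c) -mulrBr -opprB mulrN; apply: brkerN.
exact: (brker_mull Hu PS gM (subset_trans gPR RS)).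
Qed.

Lemma twisted_unit_of_pairing (P Q : {group gT}) phi phi' :
  FIso_with u m S P Q phi phi' -> pairing_surjective u m P Q phi phi' ->
  exists a, twisted_unit u m P Q phi phi' a.
Proof.
move=> [[PS _ _ _] _ phi'K _] pairing.
have DP : Delta (phi' \o phi) P = Delta id P.
  by apply: eq_in_imset => x xP /=; rewrite phi'K.
have [|a' [a [Qa' Pa Ka]]] := pairing 1.
  by rewrite DP; apply: (fixedpt1_Delta_id Hu).
exists a; split=> //; exists a'; split=> //.
by rewrite -opprB -DP; apply: brkerN.
Qed.

End FusionIsomorphisms.

Theorem proposition5p2 (O : idomainType) (m : {pred O}) (p : nat)
  (A : algType O) (gT : finGroupType) (S : {group gT}) (u : gT -> A) :
  good_coefficients m p ->
  (p.-group S)%g ->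
  interior_structure S u ->
  divisible u m S ->
  has_all_twisted_units u m S <->
  (forall (P Q R : {group gT}) (phi psi : gT -> gT),
     FIso u m S P Q phi -> FIso u m S Q R psi ->
     pairing_surjective u m P Q phi psi).
Proof.
move=> _ _ Hu _; split=> [twisted P Q R phi psi [phi' Hphi] [_ [Hpsi _ _ _]] |].
  have [a Ha] := twisted _ _ _ _ Hphi.
  exact: (pairing_surjective_of_twisted_unit Hu Hphi Hpsi Ha).
move=> pairing P Q phi phi' Hphi; apply: (twisted_unit_of_pairing Hu Hphi).
by apply: (pairing P Q P); [exists phi' | exists phi; apply: FIso_with_sym].
Qed.
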